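(* Let $G$ be a finite simple graph which is either a tree or a unicyclic graph (a connected graph with exactly one cycle) whose cycle has odd length, and let $\mathcal{N}G$ be its normal graph algebra over a field $\mathbb{F}$ of characteristic not $2$. Then $G$ is edge-square: for every edge $\mathfrak{e}$ of $G$ there exists $u\in U_G$ with $u^2=\mathfrak{e}$.
   Context: For a finite simple graph $G$ with vertex set $VG$ and edge set $EG$ (edge with endpoints $x,y$ written $[x,y]$), the normal graph algebra $\mathcal{N}G$ is the $\mathbb{F}$-vector space $U_G\oplus\mathfrak{Z}_G$, where $U_G$ has basis $VG$ and $\mathfrak{Z}_G$ has basis $EG$, with commutative bilinear product determined by: for distinct vertices $x,y$, $xy=[x,y]$ if adjacent and $0$ otherwise; $x^2=\sum_{y\sim x}[x,y]$; all products involving an element of $\mathfrak{Z}_G$ are $0$. Equivalently, for $u=\sum_x\theta_x x$, $u^2=\sum_{[x,y]\in EG}(\theta_x+\theta_y)^2[x,y]$. *)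

From mathcomp Require Import all_boot all_order all_algebra.
Set Implicit Arguments. Unset Strict Implicit. Unset Printing Implicit Defensive.
Import GRing.Theory.
Local Open Scope ring_scope.

(* A finite simple graph: vertex type V (a finType), adjacency e : rel V,
   assumed symmetric and irreflexive. An edge [x,y] is the 2-set {x,y}. *)
Section Graph.
Variables (V : finType) (e : rel V).

Definition edge_set : {set {set V}} := [set E : {set V} | [exists x : V, exists y : V, e x y && (E == [set x; y])]].

Definition connected_graph : Prop := forall x y : V, connect e x y.

Definition is_graph_cycle (p : seq V) : bool := [&& (2 < size p)%N, uniq p & cycle e p].

(* the edges of a cycle (identifies rotations / reversals of the same cycle) *)
Definition cycle_edges (p : seq V) : {set {set V}} := [set [set x; next p x] | x in p].

Definition is_tree : Prop := connected_graph /\ forall p, ~~ is_graph_cycle p.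

Definition is_odd_unicyclic : Prop :=
  connected_graph /\
  exists p, [/\ is_graph_cycle p, odd (size p) &
              forall q, is_graph_cycle q -> cycle_edges q = cycle_edges p].

Variable F : fieldType.

(* Elements of U_G: coefficient vectors theta : V -> F (u = sum_x theta_x x).
   Elements of Z_G: coefficient functions on 2-sets, supported on edge_set.
   Square in NG: u^2 = sum_{[x,y] in EG} (theta_x + theta_y)^2 [x,y]. *)
Definition NG_square (theta : V -> F) : {ffun {set V} -> F} :=
  [ffun E => if E \in edge_set then (\sum_(v in E) theta v) ^+ 2 else 0].

Definition edge_elt (E0 : {set V}) : {ffun {set V} -> F} :=
  [ffun E => if E == E0 then 1 else 0].

Definition edge_square : Prop :=
  forall E0, E0 \in edge_set -> exists theta : V -> F, NG_square theta = edge_elt E0.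

End Graph.

(* Deleting the edge ab, it suffices to find theta with theta a + theta b = 1
   and theta x + theta y = 0 on every remaining edge xy.  Such antisymmetric
   functions come from the bipartite double cover of G - ab: the function
   [(s,+) ~ (v,+)] - [(s,+) ~ (v,-)] is one, equal to +-1 on the component of s
   when that component has no odd cycle and to 0 off it.  If a and b lie in
   different components of G - ab, at most one of them carries the unique cycle
   of G, and s in the other one gives theta a + theta b = +-1.  If they lie in
   the same component, the unique cycle of G passes through ab, so G - ab is
   bipartite; a and b are on the same side, since otherwise G itself would be
   bipartite, contradicting its odd cycle, and s = a gives 1 + 1 = 2 != 0. *)

From mathcomp Require Import all_boot all_order all_algebra.
From mathcomp Require Import zify.
Set Implicit Arguments. Unset Strict Implicit. Unset Printing Implicit Defensive.
Import GRing.Theory.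

Section ClosedWalks.
Variables (T : eqType) (r : rel T).

Lemma path_coloring (col : T -> bool) :
    (forall x y, r x y -> col y = ~~ col x) ->
  forall x p, path r x p -> col (last x p) = col x (+) odd (size p).
Proof.
move=> col_r x p; elim: p x => [|y p IHp] x /=; first by rewrite addbF.
by case/andP=> /col_r col_y /IHp->; rewrite col_y addNb addbN.
Qed.

Lemma cycle_coloring_even (col : T -> bool) :
    (forall x y, r x y -> col y = ~~ col x) ->
  forall p, cycle r p -> ~~ odd (size p).
Proof.
move=> col_r [|x p] //= /(path_coloring col_r).
by rewrite last_rcons size_rcons /=; case: (col x); case: (odd (size p)).
Qed.

Lemma not_uniq_split (s : seq T) :
  ~~ uniq s -> exists s1 y s2 s3, s = s1 ++ y :: s2 ++ y :: s3.
Proof.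
elim: s => //= x s IHs; rewrite negb_and negbK.
case: (boolP (x \in s)) => [/splitPr[s2 s3] _ | _ /IHs[s1 [y [s2 [s3 ->]]]]].
  by exists [::], x, s2, s3.
by exists (x :: s1), y, s2, s3.
Qed.

Lemma cycle_split s1 y s2 s3 :
  cycle r (s1 ++ y :: s2 ++ y :: s3) -> cycle r (y :: s2) /\ cycle r (y :: s3 ++ s1).
Proof.
rewrite -(rot_cycle (size s1)) rot_size_cat /= rcons_cat cat_path /=.
rewrite cat_path /= last_cat /= !rcons_path cat_path last_cat.
by case/and3P=> /and3P[-> -> ->] -> ->.
Qed.

Lemma cycle_odd_uniq s : cycle r s -> odd (size s) ->
  exists c, [/\ cycle r c, uniq c, odd (size c) & {subset c <= s}].
Proof.
have [n] := ubnP (size s); elim: n s => // n IHn s lt_s_n cycle_s odd_s.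
have [uniq_s | /not_uniq_split[s1 [y [s2 [s3 def_s]]]]] := boolP (uniq s).
  by exists s; split.
(* A repeated vertex splits s into two shorter closed walks, one of them odd. *)
have [t [cycle_t odd_t lt_t sub_t]] :
    exists t, [/\ cycle r t, odd (size t), size t < size s & {subset t <= s}].
  have [cycle2 cycle3] : cycle r (y :: s2) /\ cycle r (y :: s3 ++ s1).
    by apply: cycle_split; rewrite -def_s.
  have size_s : size s = size (y :: s2) + size (y :: s3 ++ s1).
    by rewrite def_s !size_cat /= !size_cat /=; lia.
  have mem_s z : (z \in s) = (z \in y :: s2) || (z \in y :: s3 ++ s1).
    by rewrite def_s !(inE, mem_cat); case: (z == y); case: (z \in s1);
      case: (z \in s2); case: (z \in s3).
  have [odd2 | even2] := boolP (odd (size (y :: s2))).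
    exists (y :: s2); split=> //; first by rewrite size_s /=; lia.
    by move=> z z2; rewrite mem_s z2.
  exists (y :: s3 ++ s1); split=> //.
  - by move: odd_s; rewrite size_s oddD (negbTE even2).
  - by rewrite size_s /=; lia.
  - by move=> z z3; rewrite mem_s z3 orbT.
have [c [cycle_c uniq_c odd_c sub_c]] := IHn t (leq_trans lt_t lt_s_n) cycle_t odd_t.
by exists c; split=> // z /sub_c /sub_t.
Qed.

End ClosedWalks.

Lemma homo_connect (T1 T2 : finType) (r1 : rel T1) (r2 : rel T2) (f : T1 -> T2) :
  {homo f : x y / r1 x y >-> r2 x y} ->
  {homo f : x y / connect r1 x y >-> connect r2 x y}.
Proof.
move=> f_homo x y /connectP[p p_path ->]; apply/connectP.
by exists (map f p); [exact: homo_path p_path | rewrite last_map].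
Qed.

Section DoubleCover.
Variables (T : finType) (r : rel T).

Definition double_cover : rel (T * bool) :=
  fun u w => r u.1 w.1 && (w.2 == ~~ u.2).

Local Notation cover_connect := (connect double_cover).

Lemma connect_double_cover_proj u w : cover_connect u w -> connect r u.1 w.1.
Proof. by apply: homo_connect => {}u {}w /andP[]. Qed.

Lemma connect_double_cover_flip x c y d :
  cover_connect (x, c) (y, d) -> cover_connect (x, ~~ c) (y, ~~ d).
Proof.
apply: (homo_connect (f := fun u => (u.1, ~~ u.2))) => -[x1 x2] [y1 y2].
by rewrite /double_cover /= => /andP[-> /eqP->]; rewrite eqxx.
Qed.

Lemma path_double_cover_lift x c p :
  path r x p -> cover_connect (x, c) (last x p, c (+) odd (size p)).
Proof.
elim: p x c => [|y p IHp] x c /=; first by rewrite addbF connect0.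
case/andP=> r_xy /(IHp _ (~~ c)); rewrite addNb -addbN; apply: connect_trans.
by apply: connect1; rewrite /double_cover /= r_xy eqxx.
Qed.

Lemma connect_double_cover_lift x y c :
  connect r x y -> exists d, cover_connect (x, c) (y, d).
Proof.
case/connectP=> p /(path_double_cover_lift c) lift_p ->.
by exists (c (+) odd (size p)).
Qed.

Lemma double_cover_odd_cycle x c : cover_connect (x, c) (x, ~~ c) ->
  exists p, [/\ cycle r p, uniq p, odd (size p) & {subset p <= connect r x}].
Proof.
case/connectP=> q q_path last_q.
have odd_q : odd (size q).
  have cover_col u w : double_cover u w -> w.2 = ~~ u.2 by case/andP=> _ /eqP.
  have := path_coloring cover_col q_path; rewrite -last_q /=.
  by case: (c); case: (odd _).
have walk_path : path r x (map fst q).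
  by apply: homo_path q_path => u w /andP[].
have last_walk : last x (map fst q) = x by rewrite (last_map fst q (x, c)) -last_q.
case/lastP: (map fst q) (size_map fst q) walk_path last_walk => [|t z size_walk].
  by move=> size_q; rewrite -size_q in odd_q.
rewrite last_rcons => walk_path eq_zx; subst z.
have [|p [cycle_p uniq_p odd_p sub_p]] := @cycle_odd_uniq _ r (x :: t) walk_path.
  by rewrite (_ : size (x :: t) = size q) // -size_walk size_rcons.
exists p; split=> // y /sub_p y_walk; apply: (path_connect walk_path).
by rewrite -cats1 -cat_cons mem_cat y_walk.
Qed.

Hypothesis rsym : symmetric r.

Lemma double_cover_sym : symmetric double_cover.
Proof. by move=> [x c] [y d]; rewrite /double_cover /= rsym; case: c; case: d. Qed.

Lemma connect_double_cover_sym : connect_sym double_cover.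
Proof. exact: sym_connect_sym double_cover_sym. Qed.

Lemma connect_double_cover_edge s x y c :
  r x y -> cover_connect s (y, c) = cover_connect s (x, ~~ c).
Proof.
move=> r_xy; apply/idP/idP => /connect_trans; apply; apply: connect1.
  by rewrite /double_cover /= rsym r_xy eqxx.
by rewrite /double_cover /= r_xy negbK eqxx.
Qed.

Lemma connect_double_cover_fibre s c x d :
  ~~ cover_connect (s, c) (s, ~~ c) -> connect r s x ->
  cover_connect (s, c) (x, ~~ d) = ~~ cover_connect (s, c) (x, d).
Proof.
move=> no_odd /(connect_double_cover_lift c)[d' reach_d'].
have [reach_d | unreach_d] /= := boolP (cover_connect (s, c) (x, d)).
  apply/negbTE; apply: contra no_odd => /connect_double_cover_flip.
  by rewrite negbK connect_double_cover_sym; apply: connect_trans.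
by move: reach_d' unreach_d; case: d d' => [] [] // ->.
Qed.

End DoubleCover.

Local Open Scope ring_scope.

Section DoubleCoverSign.
Variables (T : finType) (r : rel T) (R : ringType).
Local Notation cover_connect := (connect (double_cover r)).

Definition double_cover_sign s x : R :=
  (cover_connect (s, true) (x, true))%:R - (cover_connect (s, true) (x, false))%:R.

Lemma double_cover_sign_edge s x y : symmetric r -> r x y ->
  double_cover_sign s x + double_cover_sign s y = 0.
Proof.
move=> rsym r_xy; rewrite /double_cover_sign.
by rewrite !(connect_double_cover_edge rsym _ _ r_xy) /= addrC addrA subrK subrr.
Qed.

Lemma double_cover_sign_out s x : ~~ connect r s x -> double_cover_sign s x = 0.
Proof.
move=> unreach; have unlift d : cover_connect (s, true) (x, d) = false.
  by apply: contraNF unreach => /connect_double_cover_proj.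
by rewrite /double_cover_sign !unlift subrr.
Qed.

Lemma double_cover_sign_even s x : symmetric r ->
  ~~ cover_connect (s, true) (s, false) -> cover_connect (s, true) (x, true) ->
  double_cover_sign s x = 1.
Proof.
move=> rsym no_odd reach; rewrite /double_cover_sign reach.
have := connect_double_cover_fibre rsym true no_odd (connect_double_cover_proj reach).
by rewrite reach /= => ->; rewrite subr0.
Qed.

End DoubleCoverSign.

Section GraphCycles.
Variables (V : finType) (e : rel V).

Lemma edge_setP E :
  reflect (exists x y, e x y /\ E = [set x; y]) (E \in edge_set e).
Proof.
rewrite inE; apply: (iffP existsP) => [[x /existsP[y /andP[e_xy /eqP->]]] |].
  by exists x, y.
case=> x [y [e_xy ->]].
by exists x; apply/existsP; exists y; rewrite e_xy eqxx.
Qed.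

Lemma is_graph_cycle_odd (p : seq V) : irreflexive e ->
  cycle e p -> uniq p -> odd (size p) -> is_graph_cycle e p.
Proof.
move=> eirr cycle_p uniq_p odd_p; rewrite /is_graph_cycle uniq_p cycle_p andbT.
by case: p cycle_p odd_p {uniq_p} => [|x [|y [|z p]]] //=; rewrite eirr.
Qed.

Lemma cycle_edges_sub (p q : seq V) : cycle_edges p = cycle_edges q -> {subset p <= q}.
Proof.
move=> edges_pq x p_x.
have /imsetP[y q_y /setP/(_ x)] : [set x; next p x] \in cycle_edges q.
  by rewrite -edges_pq; apply: imset_f.
by rewrite set21 => /esym/set2P[->|->] //; rewrite mem_next.
Qed.

Lemma unique_cycle_edges (p q : seq V) : is_tree e \/ is_odd_unicyclic e ->
  is_graph_cycle e p -> is_graph_cycle e q -> cycle_edges p = cycle_edges q.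
Proof.
case=> [[_ acyclic] | [_ [c [_ _ c_unique]]]] graph_p graph_q.
  by case/negP: (acyclic p).
by rewrite (c_unique _ graph_p) (c_unique _ graph_q).
Qed.

End GraphCycles.

Section DeleteEdge.
Variables (V : finType) (e : rel V) (a b : V).

Definition del_edge : rel V := fun x y => e x y && ([set x; y] != [set a; b]).

Local Notation e' := del_edge.

Hypotheses (esym : symmetric e) (eirr : irreflexive e) (eab : e a b).

Lemma del_edge_sub : subrel e' e.
Proof. by move=> x y /andP[]. Qed.

Lemma del_edge_sym : symmetric e'.
Proof. by move=> x y; rewrite /del_edge esym setUC. Qed.

Lemma del_edgeP x y : e x y -> ~~ e' x y -> x = a /\ y = b \/ x = b /\ y = a.
Proof.
move=> e_xy; rewrite /del_edge e_xy negbK => /eqP edge_xy.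
have /set2P x_ab : x \in [set a; b] by rewrite -edge_xy set21.
have /set2P y_ab : y \in [set a; b] by rewrite -edge_xy set22.
by case: x_ab y_ab e_xy => -> [] ->; rewrite ?eirr //; [left | right].
Qed.

Lemma cycle_del_edge_edges c : cycle e' c -> [set a; b] \notin cycle_edges c.
Proof.
move=> cycle_c; apply/imsetP => -[x c_x edge_x].
by have := next_cycle cycle_c c_x; rewrite /del_edge -edge_x eqxx andbF.
Qed.

Lemma del_edge_connected : connected_graph e -> connect e' a b -> connected_graph e'.
Proof.
move=> conn_e conn_ab x y; apply: connect_sub (conn_e x y) => {}x {}y e_xy.
have [/connect1 // | /(del_edgeP e_xy)[[-> ->] | [-> ->]] //] := boolP (e' x y).
by rewrite (sym_connect_sym del_edge_sym).
Qed.

Lemma cycle_through_del_edge :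
  connect e' a b -> exists2 C, is_graph_cycle e C & [set a; b] \in cycle_edges C.
Proof.
rewrite (sym_connect_sym del_edge_sym) => /connectP[p path_p a_last].
case: (shortenP path_p) a_last => q path_q uniq_q _.
case/lastP: q path_q uniq_q => [|t z] path_q uniq_q.
  by move=> /= a_b; move: eab; rewrite a_b eirr.
rewrite last_rcons => a_z; subst z.
case: t path_q uniq_q => [|y t] path_q uniq_q.
  by move: path_q; rewrite /= /del_edge setUC eqxx !andbF.
exists [:: a, b, y & t]; last by apply/imsetP; exists a; rewrite /= ?inE eqxx.
have uniq_C : uniq [:: a, b, y & t] by move: uniq_q; rewrite -rcons_cons rcons_uniq.
by rewrite /is_graph_cycle uniq_C /= eab; exact: (sub_path del_edge_sub path_q).
Qed.

Lemma del_edge_odd_cycle s c : connect (double_cover e') (s, c) (s, ~~ c) ->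
  exists C, [/\ is_graph_cycle e C, [set a; b] \notin cycle_edges C
              & {subset C <= connect e' s}].
Proof.
case/double_cover_odd_cycle=> C [cycle_C uniq_C odd_C sub_C]; exists C; split=> //.
  exact: is_graph_cycle_odd (sub_cycle del_edge_sub cycle_C) uniq_C odd_C.
exact: cycle_del_edge_edges.
Qed.

End DeleteEdge.

Section EdgeSigning.
Variables (V : finType) (e : rel V) (F : fieldType) (a b : V).
Hypotheses (esym : symmetric e) (eirr : irreflexive e) (eab : e a b).
Hypothesis tree_or_unicyclic : is_tree e \/ is_odd_unicyclic e.

Local Notation e' := (del_edge e a b).
Local Notation cover_connect := (connect (double_cover e')).
Local Notation sign := (@double_cover_sign _ e' F).

Let e'sym := del_edge_sym a b esym.

Let sign_self s : ~~ cover_connect (s, true) (s, false) -> sign s s = 1.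
Proof. by move=> no_odd; apply: double_cover_sign_even (connect0 _ _). Qed.

Lemma del_edge_sign_connected : (2%:R : F) != 0 ->
  connect e' a b -> sign a a + sign a b != 0.
Proof.
move=> two_neq0 conn_ab.
have [C1 graph_C1 ab_C1] := cycle_through_del_edge esym eirr eab conn_ab.
have [conn_e [P [graph_P odd_P _]]] : is_odd_unicyclic e.
  by case: tree_or_unicyclic => // -[_ /(_ C1)]; rewrite graph_C1.
have no_odd : ~~ cover_connect (a, true) (a, false).
  apply/negP => /(del_edge_odd_cycle eirr)[C2 [graph_C2 ab_C2 _]].
  by move: ab_C2; rewrite (unique_cycle_edges tree_or_unicyclic graph_C2 graph_C1) ab_C1.
rewrite sign_self //.
have [even_ab | odd_ab] := boolP (cover_connect (a, true) (b, true)).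
  by rewrite double_cover_sign_even.
pose col x := cover_connect (a, true) (x, true).
have conn_e' := del_edge_connected esym eirr conn_e conn_ab.
have col_e x y : e x y -> col y = ~~ col x.
  move=> e_xy; have [e'_xy | /(del_edgeP eirr e_xy)[[-> ->] | [-> ->]]] := boolP (e' x y).
  - by rewrite /col (connect_double_cover_edge e'sym _ _ e'_xy) connect_double_cover_fibre.
  - by rewrite /col connect0 (negbTE odd_ab).
  - by rewrite /col connect0 (negbTE odd_ab).
case/and3P: graph_P => _ _ cycle_P.
by move: odd_P; rewrite (negbTE (cycle_coloring_even col_e cycle_P)).
Qed.

Lemma del_edge_sign_disconnected :
  ~~ connect e' a b -> exists s, sign s a + sign s b != 0.
Proof.
move=> disconn_ab; have disconn_ba : ~~ connect e' b a by rewrite (sym_connect_sym e'sym).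
have [odd_a | even_a] := boolP (cover_connect (a, true) (a, false)); last first.
  by exists a; rewrite sign_self // double_cover_sign_out // addr0 oner_neq0.
have [odd_b | even_b] := boolP (cover_connect (b, true) (b, false)); last first.
  by exists b; rewrite sign_self // double_cover_sign_out // add0r oner_neq0.
have [Ca [graph_Ca _ Ca_a]] := del_edge_odd_cycle eirr odd_a.
have [Cb [graph_Cb _ Cb_b]] := del_edge_odd_cycle eirr odd_b.
have sub_ab := cycle_edges_sub (unique_cycle_edges tree_or_unicyclic graph_Ca graph_Cb).
case: Ca graph_Ca Ca_a sub_ab => [// | x Ca _ Ca_a sub_ab].
case/negP: disconn_ab; apply: connect_trans (Ca_a x (mem_head _ _)) _.
by rewrite (sym_connect_sym e'sym); apply: Cb_b; apply: sub_ab; apply: mem_head.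
Qed.

Lemma del_edge_sign_nonzero : (2%:R : F) != 0 -> exists s, sign s a + sign s b != 0.
Proof.
move=> two_neq0; have [conn_ab | disconn_ab] := boolP (connect e' a b).
  by exists a; apply: del_edge_sign_connected.
exact: del_edge_sign_disconnected.
Qed.

Lemma NG_square_del_edge (theta : V -> F) : theta a + theta b = 1 ->
    (forall x y, e' x y -> theta x + theta y = 0) ->
  NG_square e theta = edge_elt F [set a; b].
Proof.
move=> theta_ab theta_e'.
have sum_edge x y : e x y -> \sum_(v in [set x; y]) theta v = theta x + theta y.
  move=> e_xy; rewrite big_setU1 ?big_set1 // in_set1.
  by apply: contraTneq e_xy => ->; rewrite eirr.
apply/ffunP => E; rewrite !ffunE.
have [/edge_setP[x [y [e_xy ->]]] | notin_E] := boolP (E \in edge_set e).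
  have [-> | ne_ab] := eqVneq [set x; y] [set a; b].
    by rewrite sum_edge // theta_ab expr1n.
  by rewrite sum_edge // theta_e' ?expr0n // /del_edge e_xy ne_ab.
have -> // : (E == [set a; b]) = false.
by apply: contraNF notin_E => /eqP->; apply/edge_setP; exists a, b.
Qed.

End EdgeSigning.

Theorem proposition6p2 (F : fieldType) (V : finType) (e : rel V) :
  symmetric e -> irreflexive e -> (2%:R : F) != 0 ->
  is_tree e \/ is_odd_unicyclic e ->
  edge_square e F.
Proof.
move=> esym eirr two_neq0 tree_or_unicyclic _ /edge_setP[a [b [eab ->]]].
pose sign := double_cover_sign (del_edge e a b) F.
have [s sign_ab] := del_edge_sign_nonzero esym eirr eab tree_or_unicyclic two_neq0.
exists (fun x => sign s x / (sign s a + sign s b)).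
apply: NG_square_del_edge => //; first by rewrite -mulrDl mulfV.
move=> x y e'_xy; rewrite -mulrDl double_cover_sign_edge ?mul0r //.
exact: del_edge_sym.
Qed.
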